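(* For $n\geqslant 5$ let $F_n$ be the tournament on $\{0,\ldots,n-1\}$ whose arcs are the pairs $(i,j)$ with $j\geqslant i+2$ together with the pairs $(i,i-1)$ for $1\leqslant i\leqslant n-1$. Then: (1) for every $n\geqslant 5$, $F_n$ is indecomposable; (2) for every $n\geqslant 6$, every vertex of $F_n$ other than $0$ and $n-1$ is critical, and $0$ and $n-1$ are not critical; (3) for every $n\geqslant 10$, $F_n$ has no strongly critical vertex.
   Context: A tournament $T=(V,A)$: finite vertex set, and for all distinct $x,y$ exactly one of $(x,y),(y,x)$ is an arc; write $x\to y$ for $(x,y)\in A$. For $X\subseteq V$, $T[X]$ is the induced subtournament and $T-x=T[V\setminus\{x\}]$. An interval of $T$ is $I\subseteq V$ such that for every $x\in V\setminus I$, either $x\to a$ for all $a\in I$ or $a\to x$ for all $a\in I$; trivial intervals are $\varnothing$, $V$, singletons; $T$ (with $\geqslant 3$ vertices) is indecomposable if all its intervals are trivial, decomposable otherwise. A vertex $x$ of an indecomposable tournament $T$ is critical if $T-x$ is decomposable. For an indecomposable tournament $T$ with at least $5$ vertices, a vertex $x$ is strongly critical if for every $X\subseteq V(T)$ with $x\in X$, $|X|\geqslant 5$ and $T[X]$ indecomposable, $x$ is a critical vertex of $T[X]$. *)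

From mathcomp Require Import all_boot.
Set Warnings "-notation-overridden".
Set Implicit Arguments. Unset Strict Implicit. Unset Printing Implicit Defensive.

(* Induced subtournaments T[X] are represented by
   the vertex subset X : {set T} (the arc relation is restricted to X). *)

Definition is_interval (T : finType) (arc : rel T) (X I : {set T}) : Prop :=
  I \subset X /\
  forall x, x \in X :\: I ->
    (forall a, a \in I -> arc x a) \/ (forall a, a \in I -> arc a x).

Definition trivial_subset (T : finType) (X I : {set T}) : Prop :=
  I = set0 \/ I = X \/ exists a, I = [set a].

Definition indecomposable (T : finType) (arc : rel T) (X : {set T}) : Prop :=
  3 <= #|X| /\ forall I : {set T}, is_interval arc X I -> trivial_subset X I.

Definition decomposable (T : finType) (arc : rel T) (X : {set T}) : Prop :=
  3 <= #|X| /\ exists I : {set T}, is_interval arc X I /\ ~ trivial_subset X I.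

Definition critical (T : finType) (arc : rel T) (X : {set T}) (x : T) : Prop :=
  indecomposable arc X /\ x \in X /\ decomposable arc (X :\ x).

Definition strongly_critical (T : finType) (arc : rel T) (X : {set T}) (x : T)
  : Prop :=
  indecomposable arc X /\ 5 <= #|X| /\ x \in X /\
  forall Y : {set T}, Y \subset X -> x \in Y -> 5 <= #|Y| ->
    indecomposable arc Y -> critical arc Y x.

Definition F_arc (n : nat) : rel 'I_n :=
  fun i j => ((val i).+2 <= val j) || (val i == (val j).+1).
Arguments F_arc n : clear implicits.

Set Warnings "-notation-overridden".
From mathcomp Require Import all_boot.
From mathcomp Require Import zify.

Set Implicit Arguments.
Unset Strict Implicit.
Unset Printing Implicit Defensive.

(* Every segment [lo, hi] of F_n with at least five vertices induces an
   indecomposable subtournament: a nontrivial interval must contain both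
   ends of the segment (an outside neighbour of its extreme vertices would
   split it), and then every other vertex is split by vertices already in
   the interval.  Hence removing an end of F_n, or of any segment with six
   vertices, leaves an indecomposable tournament, so the ends of F_n are not
   critical and no vertex is strongly critical.  Removing an inner vertex i
   makes the vertices below i an interval, since each of them beats each
   vertex above i. *)

Section Tournament.

Context {T : finType} {arc : rel T}.

Lemma mem_interval_mixed (X I : {set T}) (a b c : T) :
  is_interval arc X I -> c \in X -> a \in I -> b \in I ->
  ~~ arc c a -> ~~ arc b c -> c \in I.
Proof.
move=> [_ intI] cX aI bI /negP ca /negP bc; apply/negPn/negP => cI.
have /intI[/(_ a aI) // | /(_ b bI) //] : c \in X :\: I by rewrite inE cI.
Qed.

Lemma trivial_subset_card_le1 (X I : {set T}) : #|I| <= 1 -> trivial_subset X I.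
Proof.
case: (posnP #|I|) => [/cards0_eq I0 _ | I_gt0 I_le1]; first by left.
by right; right; apply/cards1P; lia.
Qed.

Lemma not_trivial_subset (X I : {set T}) (a b c : T) :
  a \in I -> b \in I -> a != b -> c \in X -> c \notin I -> ~ trivial_subset X I.
Proof.
move=> aI bI ab cX cI [I0 | [IX | [d Id]]].
- by rewrite I0 inE in aI.
- by rewrite IX cX in cI.
- by move: aI bI ab; rewrite Id !inE => /eqP-> /eqP->; rewrite eqxx.
Qed.

Lemma indecomposable_not_decomposable (X : {set T}) :
  indecomposable arc X -> ~ decomposable arc X.
Proof. by move=> [_ trivX] [_ [I [intI ntI]]]; apply/ntI/trivX. Qed.

Lemma critical_indecomposableD1 (X : {set T}) (x : T) :
  critical arc X x -> ~ indecomposable arc (X :\ x).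
Proof. by move=> [_ [_ decX]] /indecomposable_not_decomposable. Qed.

Lemma strongly_critical_indecomposableD1 (X Y : {set T}) (x : T) :
  strongly_critical arc X x -> Y \subset X -> x \in Y -> 5 <= #|Y| ->
  indecomposable arc Y -> ~ indecomposable arc (Y :\ x).
Proof.
move=> [_ [_ [_ scX]]] YX xY Y5 indY.
exact/critical_indecomposableD1/scX.
Qed.

End Tournament.

Definition segment (n lo hi : nat) : {set 'I_n.+1} := [set k : 'I_n.+1 | lo <= k <= hi].

Lemma mem_segment_inord (n lo hi k : nat) :
  lo <= k <= hi -> hi <= n -> (inord k : 'I_n.+1) \in segment n lo hi.
Proof. by move=> k_in hi_n; rewrite inE inordK //; lia. Qed.

Lemma segmentT (n : nat) : [set: 'I_n.+1] = segment n 0 n.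
Proof. by apply/setP => k; rewrite !inE; have := ltn_ord k; lia. Qed.

Lemma segmentD1l (n lo hi : nat) (i : 'I_n.+1) :
  i = lo :> nat -> segment n lo hi :\ i = segment n lo.+1 hi.
Proof. by move=> i_lo; apply/setP => k; rewrite !inE -val_eqE /=; lia. Qed.

Lemma segmentD1r (n lo hi : nat) (i : 'I_n.+1) :
  i = hi :> nat -> lo < hi -> segment n lo hi :\ i = segment n lo hi.-1.
Proof. by move=> i_hi lo_hi; apply/setP => k; rewrite !inE -val_eqE /=; lia. Qed.

Lemma leq_card_segment (n lo hi : nat) :
  lo <= hi <= n -> (hi - lo).+1 <= #|segment n lo hi|.
Proof.
move=> lo_hi_n.
pose shift (k : 'I_(hi - lo).+1) : 'I_n.+1 := inord (lo + k).
have shift_inj : injective shift.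
  move=> k l /(congr1 val); rewrite /shift /= !inordK; last 2 first.
  - by have := ltn_ord l; lia.
  - by have := ltn_ord k; lia.
  by move=> kl; apply/val_inj => /=; lia.
rewrite -[X in X <= _]card_ord -(card_imset _ shift_inj).
apply/subset_leq_card/subsetP => _ /imsetP[k _ ->].
by apply: mem_segment_inord; have := ltn_ord k; lia.
Qed.

Section IntervalOfSegment.

Variables (n lo hi : nat) (I : {set 'I_n.+1}).
Hypotheses (lo4_hi : lo + 4 <= hi) (hi_n : hi <= n).
Hypothesis intI : is_interval (F_arc n.+1) (segment n lo hi) I.

Lemma segment_interval_sub (k : 'I_n.+1) : k \in I -> lo <= k <= hi.
Proof. by case: intI => /subsetP IS _ /IS; rewrite inE. Qed.

Lemma mem_segment_interval (c : nat) (a b : 'I_n.+1) :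
  lo <= c <= hi -> a \in I -> b \in I ->
  ~~ F_arc n.+1 (inord c) a -> ~~ F_arc n.+1 b (inord c) -> inord c \in I.
Proof. by move=> c_in; apply: mem_interval_mixed intI (mem_segment_inord c_in hi_n). Qed.

Lemma segment_interval_min (m M : 'I_n.+1) :
  m \in I -> M \in I -> m < M -> (forall k, k \in I -> m <= k) -> m = lo :> nat.
Proof.
move=> mI MI mM m_min; have := segment_interval_sub mI.
case: (ltnP lo m) => [lo_m m_in | ]; last by lia.
have : inord m.-1 \in I.
  by apply: (mem_segment_interval _ mI MI); rewrite /F_arc /= ?inordK; lia.
by move=> /m_min; rewrite inordK; lia.
Qed.

Lemma segment_interval_max (m M : 'I_n.+1) :
  m \in I -> M \in I -> m < M -> (forall k, k \in I -> k <= M) -> M = hi :> nat.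
Proof.
move=> mI MI mM M_max; have := segment_interval_sub MI.
case: (ltnP M hi) => [M_hi M_in | ]; last by lia.
have : inord M.+1 \in I.
  by apply: (mem_segment_interval _ mI MI); rewrite /F_arc /= ?inordK; lia.
by move=> /M_max; rewrite inordK; lia.
Qed.

Lemma segment_interval_ends : 1 < #|I| -> inord lo \in I /\ inord hi \in I.
Proof.
case/card_gt1P => a [b [aI bI ab]].
case: (arg_minnP (@nat_of_ord _) aI) => m mI m_min.
case: (arg_maxnP (@nat_of_ord _) aI) => M MI M_max.
have mM : m < M.
  move: ab; rewrite -val_eqE /=.
  by have := m_min b bI; have := M_max b bI; have := m_min a aI; have := M_max a aI; lia.
rewrite -(segment_interval_min mI MI mM m_min) -(segment_interval_max mI MI mM M_max).
by rewrite !inord_val.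
Qed.

Lemma segment_interval_full :
  inord lo \in I -> inord hi \in I -> I = segment n lo hi.
Proof.
move=> loI hiI.
have inner c : lo <= c <= hi -> c != lo.+1 -> c != hi.-1 -> inord c \in I.
  move=> c_in c_lo1 c_hi1; apply: (mem_segment_interval c_in loI hiI);
  by rewrite /F_arc /= ?inordK; lia.
have lo1I : inord lo.+1 \in I.
  have lo2I : inord lo.+2 \in I by apply: inner; lia.
  by apply: (mem_segment_interval _ lo2I loI); rewrite /F_arc /= ?inordK; lia.
have hi1I : inord hi.-1 \in I.
  have hi2I : inord hi.-2 \in I by apply: inner; lia.
  by apply: (mem_segment_interval _ hiI hi2I); rewrite /F_arc /= ?inordK; lia.
apply/eqP; rewrite eqEsubset; apply/andP; split.
  by apply/subsetP => k /segment_interval_sub; rewrite inE.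
apply/subsetP => k; rewrite inE => k_in; rewrite -(inord_val k).
case: (eqVneq (k : nat) lo.+1) => [-> // | k_lo1].
case: (eqVneq (k : nat) hi.-1) => [-> // | k_hi1].
exact: inner.
Qed.

End IntervalOfSegment.

Lemma indecomposable_segment (n lo hi : nat) :
  lo + 4 <= hi -> hi <= n -> indecomposable (F_arc n.+1) (segment n lo hi).
Proof.
move=> lo4_hi hi_n; split.
  by apply: leq_trans (leq_card_segment _); lia.
move=> I intI; case: (leqP #|I| 1) => [|I_gt1]; first exact: trivial_subset_card_le1.
have [loI hiI] := segment_interval_ends lo4_hi hi_n intI I_gt1.
by right; left; apply: segment_interval_full.
Qed.

Lemma indecomposable_F (n : nat) : 5 <= n -> indecomposable (F_arc n) [set: 'I_n].
Proof.
by case: n => [// | n] n5; rewrite segmentT; apply: indecomposable_segment; lia.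
Qed.

Lemma indecomposable_F_setD1_end (n : nat) (i : 'I_n.+1) :
  5 <= n -> (i == 0 :> nat) || (i == n :> nat) ->
  indecomposable (F_arc n.+1) ([set: 'I_n.+1] :\ i).
Proof.
move=> n5 /orP[/eqP i0 | /eqP i_n]; rewrite segmentT.
  by rewrite segmentD1l //; apply: indecomposable_segment; lia.
by rewrite segmentD1r //; [apply: indecomposable_segment | ]; lia.
Qed.

Lemma is_interval_F_lower (n : nat) (i : 'I_n.+1) :
  0 < i -> is_interval (F_arc n.+1) ([set: 'I_n.+1] :\ i) (segment n 0 i.-1).
Proof.
move=> i_gt0; split.
  by apply/subsetP => k; rewrite !inE -val_eqE /=; lia.
move=> x; rewrite !inE -val_eqE /= => x_gt_i; right => a; rewrite inE /F_arc /=; lia.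
Qed.

Lemma is_interval_F_upper (n : nat) (i : 'I_n.+1) :
  is_interval (F_arc n.+1) ([set: 'I_n.+1] :\ i) (segment n i.+1 n).
Proof.
split.
  by apply/subsetP => k; rewrite !inE -val_eqE /=; lia.
move=> x; have := ltn_ord x; rewrite !inE -val_eqE /= => x_n x_lt_i.
by left => a; rewrite inE /F_arc /=; lia.
Qed.

Lemma decomposable_F_setD1_inner (n : nat) (i : 'I_n.+1) :
  4 <= n -> 0 < i < n -> decomposable (F_arc n.+1) ([set: 'I_n.+1] :\ i).
Proof.
move=> n4 i_in; split.
  move: (cardsD1 i [set: 'I_n.+1]).
  by rewrite cardsT card_ord in_setT add1n => -[<-]; lia.
have inordE k : k <= n -> (inord k : 'I_n.+1) \in [set: 'I_n.+1] :\ i = (k != i).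
  by move=> k_n; rewrite !inE -val_eqE /= inordK ?andbT ?ltnS.
have segmentE lo hi k : k <= n -> (inord k \in segment n lo hi) = (lo <= k <= hi).
  by move=> k_n; rewrite inE inordK ?ltnS.
have inord_neq k l : k <= n -> l <= n -> k != l -> (inord k : 'I_n.+1) != inord l.
  by move=> k_n l_n kl; rewrite -val_eqE /= !inordK ?ltnS.
case: (leqP i.+2 n) => i_n.
  exists (segment n i.+1 n); split; first exact: is_interval_F_upper.
  apply: (not_trivial_subset (a := inord i.+1) (b := inord i.+2) (c := inord 0));
    rewrite ?inordE ?segmentE ?inord_neq //; lia.
exists (segment n 0 i.-1); split; first by apply: is_interval_F_lower; lia.
apply: (not_trivial_subset (a := inord 0) (b := inord 1) (c := inord n));
  rewrite ?inordE ?segmentE ?inord_neq //; lia.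
Qed.

Lemma not_strongly_critical_F_segment_end (n lo hi : nat) (i : 'I_n.+1) :
  lo + 5 <= hi -> hi <= n -> (i = lo :> nat \/ i = hi :> nat) ->
  ~ strongly_critical (F_arc n.+1) [set: 'I_n.+1] i.
Proof.
move=> lo5_hi hi_n i_end sc.
have i_in : i \in segment n lo hi by rewrite inE; lia.
apply: (strongly_critical_indecomposableD1 sc (subsetT _) i_in).
- by apply: leq_trans (leq_card_segment _); lia.
- by apply: indecomposable_segment; lia.
case: i_end => [i_lo | i_hi].
  by rewrite segmentD1l //; apply: indecomposable_segment; lia.
by rewrite segmentD1r //; [apply: indecomposable_segment | ]; lia.
Qed.

Theorem mainTheorem5 :
  (forall n : nat, 5 <= n -> indecomposable (F_arc n) [set: 'I_n])
  /\
  (forall n : nat, 6 <= n ->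
     forall i : 'I_n,
       (critical (F_arc n) [set: 'I_n] i <-> (0 < val i /\ val i < n.-1)))
  /\
  (forall n : nat, 10 <= n ->
     forall i : 'I_n, ~ strongly_critical (F_arc n) [set: 'I_n] i).
Proof.
split; first exact: indecomposable_F.
split.
  case=> [// | n] n6 i; have := ltn_ord i; split.
    move=> /critical_indecomposableD1 notD1.
    have /negP : ~ ((i == 0 :> nat) || (i == n :> nat)).
      by move=> i_end; apply/notD1/indecomposable_F_setD1_end; lia.
    by move=> /=; lia.
  move=> /= i_in; split; first by apply: indecomposable_F; lia.
  by split; [exact: in_setT | apply: decomposable_F_setD1_inner; lia].
case=> [// | n] n10 i; have := ltn_ord i; case: (leqP (i + 5) n) => i5 i_n.
  by apply: (@not_strongly_critical_F_segment_end n i (i + 5)); lia.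
by apply: (@not_strongly_critical_F_segment_end n (i - 5) i); lia.
Qed.
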